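(* Let $G$ be a finite simple graph with an initial configuration $c_0$ and let $u,v\in V(G)$ satisfy $N(u)=N(v)$ or $N[u]=N[v]$. Then for every integer $t\geq0$, $|c_t(u)-c_t(v)|\leq\max\{|c_0(u)-c_0(v)|,\ 2\deg(u)\}$.
   Context: Diffusion process: for a configuration $c_t:V(G)\to\mathbb{Z}$, $c_{t+1}(w)=c_t(w)-|\{x\in N(w): c_t(w)>c_t(x)\}|+|\{x\in N(w): c_t(w)<c_t(x)\}|$ for all $w$ simultaneously. $N(u)$ is the open neighbourhood and $N[u]=N(u)\cup\{u\}$ the closed neighbourhood. *)

From mathcomp Require Import all_boot all_order all_algebra.
Set Implicit Arguments. Unset Strict Implicit. Unset Printing Implicit Defensive.
Import Order.TTheory GRing.Theory Num.Theory.
Local Open Scope ring_scope.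

Definition simple_graph (T : finType) (e : rel T) : Prop :=
  symmetric e /\ irreflexive e.

Definition nbhd (T : finType) (e : rel T) (u : T) : {set T} := [set x | e u x].
Definition cnbhd (T : finType) (e : rel T) (u : T) : {set T} := u |: nbhd e u.
Definition deg (T : finType) (e : rel T) (u : T) : nat := #|nbhd e u|.

Definition diffuse_step (T : finType) (e : rel T) (c : T -> int) : T -> int :=
  fun w => c w - (#|[set x in nbhd e w | c x < c w]|)%:Z
               + (#|[set x in nbhd e w | c w < c x]|)%:Z.

Definition config (T : finType) (e : rel T) (c0 : T -> int) (t : nat) : T -> int :=
  iter t (diffuse_step e) c0.

Set Implicit Arguments. Unset Strict Implicit. Unset Printing Implicit Defensive.
From mathcomp Require Import all_boot all_order all_algebra zify.
Import Order.TTheory GRing.Theory Num.Theory.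
Local Open Scope ring_scope.

(** Write [d = c u - c v >= 0].  One diffusion step adds to [c w] the sum of
    [sgz (c x - c w)] over the neighbours [x] of [w], and [sgz (x - a)] is
    nonincreasing in [a] with total variation [2].  False twins have the same
    [deg u] neighbours; true twins share [deg u - 1] of them and the terms they
    contribute to each other also differ by at most [2].  Either way the new
    difference lies in [[d - 2 deg u, d]], so its absolute value is at most
    [max d (2 deg u)], and the bound propagates by induction on [t]. *)

Lemma card_set_in_sum (T : finType) (A : {set T}) (P : pred T) :
  (#|[set x in A | P x]|)%:Z = \sum_(x in A) (P x : nat)%:Z.
Proof.
rewrite -sum1_card (eq_bigl (fun x => (x \in A) && P x)) => [|x]; last first.
  by rewrite !inE.
rewrite big_mkcondr /= (big_morph Posz PoszD (erefl _)).
by apply: eq_bigr => x _; case: (P x).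
Qed.

Lemma sgz_subE (a b : int) :
  sgz (b - a) = (nat_of_bool (a < b))%:Z - (nat_of_bool (b < a))%:Z.
Proof. by case: sgzP; case: ltgtP => //=; lia. Qed.

Lemma diffuse_stepE (T : finType) (e : rel T) (c : T -> int) (w : T) :
  diffuse_step e c w = c w + \sum_(x in nbhd e w) sgz (c x - c w).
Proof.
rewrite /diffuse_step !card_set_in_sum -addrA -sumrN -big_split /=.
by congr (_ + _); apply: eq_bigr => x _; rewrite sgz_subE addrC.
Qed.

Lemma sgz_subr_antimono (x a b : int) :
  b <= a -> -2 <= sgz (x - a) - sgz (x - b) <= 0.
Proof. by move=> ba; case: sgzP; case: sgzP => /=; lia. Qed.

Lemma sum_sgz_subr_antimono (T : finType) (S : {set T}) (f : T -> int) (a b : int) :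
  b <= a ->
  - (2 * #|S|)%N%:Z <= \sum_(x in S) (sgz (f x - a) - sgz (f x - b)) <= 0.
Proof.
move=> ba; apply/andP; split.
- have -> : - (2 * #|S|)%N%:Z = \sum_(x in S) (-2 : int).
    by rewrite sumr_const -mulr_natr natz; lia.
  by apply: ler_sum => x _; case/andP: (sgz_subr_antimono (f x) ba).
- by apply: sumr_le0 => x _; case/andP: (sgz_subr_antimono (f x) ba).
Qed.

Lemma norm_le_max_window (x y D : int) :
  0 <= x -> x - D <= y <= x -> `|y| <= Num.max `|x| D.
Proof. by move=> x_ge0 /andP[]; rewrite le_max; lia. Qed.

Definition twins (T : finType) (e : rel T) (u v : T) : Prop :=
  nbhd e u = nbhd e v \/ cnbhd e u = cnbhd e v.

Lemma twins_sym (T : finType) (e : rel T) (u v : T) : twins e u v -> twins e v u.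
Proof. by rewrite /twins; case=> ->; [left | right]. Qed.

Section Twins.

Variables (T : finType) (e : rel T).
Hypothesis simple_e : simple_graph e.

Lemma cnbhd_twins (u v : T) : u != v -> cnbhd e u = cnbhd e v ->
  [/\ v \in nbhd e u, u \in nbhd e v & nbhd e u :\ v = nbhd e v :\ u].
Proof.
case: simple_e => _ irr_e uv Cuv.
have mem x : (x == u) || e u x = (x == v) || e v x.
  by have := erefl (x \in cnbhd e u); rewrite {2}Cuv !inE.
split; rewrite ?inE.
- by move: (mem v); rewrite eqxx eq_sym (negbTE uv) /= => ->.
- by move: (mem u); rewrite eqxx (negbTE uv) /= => <-.
- apply/setP=> x; rewrite !inE; have := mem x.
  have [-> _|_] := eqVneq x u; first by rewrite irr_e andbF.
  by have [-> _|_ /= ->] := eqVneq x v; first by rewrite irr_e andbF.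
Qed.

Lemma deg_twins (u v : T) : twins e u v -> deg e u = deg e v.
Proof.
have [-> //|uv] := eqVneq u v.
case=> [Nuv|/(cnbhd_twins uv) [vNu uNv NuvE]]; first by rewrite /deg Nuv.
by rewrite /deg (cardsD1 v) (cardsD1 u (nbhd e v)) vNu uNv NuvE.
Qed.

Lemma diffuse_step_twins (c : T -> int) (u v : T) :
  twins e u v -> c v <= c u ->
  c u - c v - (2 * deg e u)%N%:Z <= diffuse_step e c u - diffuse_step e c v
    <= c u - c v.
Proof.
move=> twins vu; rewrite !diffuse_stepE.
have [-> | uv] := eqVneq u v; first by rewrite !subrr subr_le0 lexx.
case: twins => [Nuv | Cuv].
- rewrite -Nuv opprD addrACA -sumrB lerD2l gerDl /deg.
  exact: sum_sgz_subr_antimono.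
have [vNu uNv NuvE] := cnbhd_twins uv Cuv.
have deg_rest : deg e u = #|nbhd e v :\ u|.+1 by rewrite /deg (cardsD1 v) vNu NuvE.
have pair : -2 <= sgz (c v - c u) - sgz (c u - c v) <= 0.
  by case: sgzP; case: sgzP; lia.
have := sum_sgz_subr_antimono (nbhd e v :\ u) c vu.
rewrite (big_setD1 v vNu) (big_setD1 u uNv) /= NuvE deg_rest sumrB.
(* lia identifies the two copies of each sum only once they are named *)
set A := \sum_(x in _) sgz (c x - c u); set B := \sum_(x in _) sgz (c x - c v).
lia.
Qed.

Lemma diffuse_step_twins_norm (c : T -> int) (u v : T) : twins e u v ->
  `|diffuse_step e c u - diffuse_step e c v|
    <= Num.max `|c u - c v| (2 * deg e u)%N%:Z.
Proof.
wlog vu : u v / c v <= c u => [gen twins_uv|twins_uv].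
  have [vu|/ltW uv] := leP (c v) (c u); first exact: gen vu twins_uv.
  rewrite distrC [`|c u - c v|]distrC (deg_twins twins_uv).
  exact: gen (twins_sym twins_uv).
apply: norm_le_max_window; first by rewrite subr_ge0.
exact: diffuse_step_twins.
Qed.

End Twins.

Theorem lemma10 (T : finType) (e : rel T) (c0 : T -> int) (u v : T) :
  simple_graph e ->
  (nbhd e u = nbhd e v \/ cnbhd e u = cnbhd e v) ->
  forall t : nat,
    `|config e c0 t u - config e c0 t v| <=
      Num.max `|c0 u - c0 v| ((2 * deg e u)%N)%:Z.
Proof.
move=> simple_e twins_uv; elim=> [|t IH]; first by rewrite le_max lexx.
apply: le_trans (diffuse_step_twins_norm simple_e _ twins_uv) _.
by rewrite ge_max IH le_max lexx orbT.
Qed.
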